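(* Let $G^\sigma$ be a connected oriented unicyclic graph and $C^\sigma$ its unique cycle. (1) If there exists a vertex $v\in V(C^\sigma)$ which is saturated in $G^\sigma\{v\}$, then $sr(G^\sigma)=sr(G^\sigma\{v\})+sr(G^\sigma-G^\sigma\{v\})$. (2) If no vertex $v\in V(C^\sigma)$ is saturated in $G^\sigma\{v\}$, then $sr(G^\sigma)=sr(C^\sigma)+sr(G^\sigma-C^\sigma)$.
   Context: An oriented graph $G^\sigma$ is a simple graph $G$ together with an orientation of each edge. Its skew-adjacency matrix $S(G^\sigma)=(s_{ij})$ has $s_{ij}=1$ if there is an arc from $v_i$ to $v_j$, $s_{ij}=-1$ if there is an arc from $v_j$ to $v_i$, and $0$ otherwise; the skew-rank $sr(\cdot)$ is the rank of the skew-adjacency matrix (of the induced oriented subgraph in question). For a vertex $v$ on the cycle, $G^\sigma\{v\}$ denotes the oriented tree rooted at $v$ containing $v$, i.e. the component containing $v$ of the graph obtained from $G^\sigma$ by deleting the edges of the cycle. A vertex $v$ of a tree $T$ is saturated in $T$ if every maximum matching of $T$ contains an edge incident with $v$, and unsaturated otherwise. $G^\sigma-H^\sigma$ denotes deletion of the vertices of $H^\sigma$ together with incident edges. *)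

From mathcomp Require Import all_boot all_order all_algebra.
Set Implicit Arguments. Unset Strict Implicit. Unset Printing Implicit Defensive.
Import GRing.Theory Num.Theory.
Local Open Scope ring_scope.

Section OrientedGraphs.
Variable T : finType.

Definition oriented (a : rel T) : Prop :=
  (forall x, ~~ a x x) /\ (forall x y, a x y -> ~~ a y x).

Definition und (a : rel T) : rel T := fun x y => a x y || a y x.

Definition skew (a : rel T) (x y : T) : rat :=
  if a x y then 1 else if a y x then -1 else 0.

Definition skew_mx (a : rel T) (S : {set T}) : 'M[rat]_(#|S|) :=
  \matrix_(i < #|S|, j < #|S|) skew a (enum_val i) (enum_val j).

Definition sr (a : rel T) (S : {set T}) : nat := \rank (skew_mx a S).

Definition connected_graph (a : rel T) : Prop :=
  forall x y, connect (und a) x y.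

Definition n_edges (a : rel T) : nat := #|[set p : T * T | a p.1 p.2]|.

Definition is_graph_cycle (a : rel T) (c : seq T) : Prop :=
  [/\ uniq c, 3 <= size c & cycle (und a) c]%N.

Definition cycle_verts (c : seq T) : {set T} := [set x | x \in c].

Definition cycle_edge (c : seq T) : rel T := fun x y =>
  [&& x \in c, y \in c & (next c x == y) || (next c y == x)].

Definition del_cycle_edges (a : rel T) (c : seq T) : rel T :=
  fun x y => und a x y && ~~ cycle_edge c x y.

(* G{v}: vertex set of the component containing v after deleting cycle edges *)
Definition rooted_tree (a : rel T) (c : seq T) (v : T) : {set T} :=
  [set u | connect (del_cycle_edges a c) v u].

Definition is_matching (r : rel T) (K : {set T}) (M : {set T * T}) : Prop :=
  (forall p, p \in M -> [/\ p.1 \in K, p.2 \in K & r p.1 p.2]) /\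
  (forall p q, p \in M -> q \in M -> p != q ->
     [disjoint [set p.1; p.2] & [set q.1; q.2]]).

Definition is_max_matching (r : rel T) (K : {set T}) (M : {set T * T}) : Prop :=
  is_matching r K M /\ (forall M', is_matching r K M' -> (#|M'| <= #|M|)%N).

Definition saturated (r : rel T) (K : {set T}) (v : T) : Prop :=
  forall M, is_max_matching r K M -> exists2 p, p \in M & (v == p.1) || (v == p.2).

End OrientedGraphs.

From Pilot Require Import Defs.
From mathcomp Require Import all_boot all_order all_algebra.
From mathcomp Require Import ring lra zify.

(* Both parts rest on one cutting principle: if the block of S(G) joining a
   vertex set K to its complement factors as S_K X with X^T S_K X = 0, then
   a unipotent congruence makes S(G) block diagonal, so that
   sr(G) = sr(K) + sr(G - K).
   Since G has as many edges as vertices, deleting the cycle edges leaves a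
   forest in which every tree T{v} contains exactly one cycle vertex. In a
   tree, v is saturated iff deleting v lowers the matching number; peeling
   off pendant vertices shows that then e_v is in the range of S_T{v}, and
   otherwise the column of v is in the range of S_(T{v} - v). Case (1) cuts
   along T{v} with X built from S_K f = e_v; case (2) cuts along the cycle,
   with X built from the vectors given by the unsaturated cycle vertices. *)

Set Implicit Arguments. Unset Strict Implicit. Unset Printing Implicit Defensive.
Import GRing.Theory Num.Theory.

Lemma disjoint_setsP (X : finType) (A B : {set X}) :
  reflect (forall x, x \in A -> x \in B -> False) [disjoint A & B].
Proof.
apply: (iffP idP) => [d x xA xB|h]; first by rewrite (disjointFr d xA) in xB.
rewrite -setI_eq0; apply/eqP/setP => x; rewrite !inE.
by apply/negbTE/negP => /andP[xA xB]; exact: h xA xB.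
Qed.

Lemma cardsU_disjoint (X : finType) (A B : {set X}) :
  [disjoint A & B] -> #|A :|: B| = #|A| + #|B|.
Proof. by move=> d; rewrite cardsU -setI_eq0 in d *; rewrite (eqP d) cards0 subn0. Qed.

Lemma setD1C (X : finType) (A : {set X}) x y : A :\ x :\ y = A :\ y :\ x.
Proof. by rewrite !setDDl setUC. Qed.

Section MatchingNumber.
Variables (T : finType) (r : rel T).
Hypothesis r_sym : symmetric r.

Definition matchingb (K : {set T}) (M : {set T * T}) : bool :=
  [forall p in M, [&& p.1 \in K, p.2 \in K & r p.1 p.2]] &&
  [forall p in M, forall q in M,
     (p != q) ==> [disjoint [set p.1; p.2] & [set q.1; q.2]]].

Lemma matchingP K M : reflect (is_matching r K M) (matchingb K M).
Proof.
apply: (iffP andP) => [[/forallP H1 /forallP H2]|[H1 H2]]; split.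
- by move=> p pM; have := H1 p; rewrite pM /= => /and3P[].
- move=> p q pM qM pq; have := H2 p; rewrite pM /= => /forallP /(_ q).
  by rewrite qM pq.
- by apply/forallP=> p; apply/implyP=> pM; have [-> -> ->] := H1 p pM.
- apply/forallP=> p; apply/implyP=> pM; apply/forallP=> q; apply/implyP=> qM.
  by apply/implyP; exact: H2.
Qed.

Definition matching_number (K : {set T}) : nat :=
  \max_(M : {set T * T} | matchingb K M) #|M|.

Local Notation nu := matching_number.

Lemma matchingb0 K : matchingb K set0.
Proof. by apply/matchingP; split=> [p|p q]; rewrite inE. Qed.

Lemma leq_matching_number K M : matchingb K M -> #|M| <= nu K.
Proof. exact: leq_bigmax_cond. Qed.

Lemma matching_number_max K : exists2 M, matchingb K M & #|M| = nu K.
Proof.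
have nonempty : 0 < #|[pred M | matchingb K M]|.
  by apply/card_gt0P; exists set0; rewrite inE matchingb0.
have [M KM E] := eq_bigmax_cond (fun M : {set T * T} => #|M|) nonempty.
by exists M; [rewrite inE in KM | rewrite /matching_number -E].
Qed.

Lemma matchingbS (K K' : {set T}) M : K \subset K' -> matchingb K M -> matchingb K' M.
Proof.
move=> sKK /matchingP[H1 H2]; apply/matchingP; split=> // p pM.
by have [h1 h2 h3] := H1 p pM; split=> //; apply: (subsetP sKK).
Qed.

Lemma matching_numberS (K K' : {set T}) : K \subset K' -> nu K <= nu K'.
Proof.
move=> sKK; have [M KM <-] := matching_number_max K.
by apply: leq_matching_number; apply: matchingbS KM.
Qed.

Lemma matching_number_setD1 (K : {set T}) v : nu K <= (nu (K :\ v)).+1.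
Proof.
have [M KM <-] := matching_number_max K.
set B := [set p : T * T | (p.1 != v) && (p.2 != v)].
have MB_matching : matchingb (K :\ v) (M :&: B).
  move/matchingP: KM => [H1 H2]; apply/matchingP; split.
  - move=> p; rewrite !inE => /andP[pM /andP[p1 p2]].
    by have [h1 h2 h3] := H1 p pM; rewrite ?inE p1 p2 h1 h2 h3.
  - by move=> p q; rewrite !inE => /andP[pM _] /andP[qM _]; exact: H2.
have MB_small : #|M :\: B| <= 1.
  apply/card_le1_eqP => p q; rewrite !inE => /andP[pB pM] /andP[qB qM].
  apply/eqP/negPn/negP => pq.
  move/matchingP: KM => [_ H2]; have := H2 p q pM qM; rewrite eq_sym pq.
  move=> /(_ isT) /disjoint_setsP /(_ v); apply; rewrite !inE.
    by move: pB; rewrite negb_and !negbK ![v == _]eq_sym.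
  by move: qB; rewrite negb_and !negbK ![v == _]eq_sym.
rewrite -(cardsID B M) -addn1 leq_add //; exact: leq_matching_number.
Qed.

Lemma matching_number_isolated (K : {set T}) x :
  (forall y, y \in K -> ~~ r x y) -> nu (K :\ x) = nu K.
Proof.
move=> isol; apply/eqP; rewrite eqn_leq matching_numberS ?subsetDl //=.
have [M KM <-] := matching_number_max K; apply: leq_matching_number.
move/matchingP: KM => [H1 H2]; apply/matchingP; split=> // p pM.
have [h1 h2 h3] := H1 p pM; rewrite !inE h1 h2; split=> //.
- by apply/andP; split=> //; apply: contraTneq h3 => ->; apply: isol.
- by apply/andP; split=> //; apply: contraTneq h3 => ->; rewrite r_sym; apply: isol.
Qed.

Lemma matching_number_edge (K : {set T}) x y :
  x \in K -> y \in K -> r x y -> x != y -> (nu (K :\ x :\ y)).+1 <= nu K.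
Proof.
move=> xK yK rxy xy; have [M KM <-] := matching_number_max (K :\ x :\ y).
have xyM : (x, y) \notin M.
  apply/negP=> xyM; move/matchingP: KM => [H1 _]; have [h1 _ _] := H1 _ xyM.
  by move: h1; rewrite !inE /= eqxx andbF.
have := cardsU1 (x, y) M; rewrite xyM add1n => <-; apply: leq_matching_number.
move/matchingP: KM => [H1 H2]; apply/matchingP; split.
- move=> p; rewrite !inE => /orP[/eqP->//|pM].
  have [h1 h2 h3] := H1 p pM; move: h1 h2; rewrite !inE.
  by case/and3P=> _ _ -> /and3P[_ _ ->].
- have avoid q : q \in M -> [disjoint [set x; y] & [set q.1; q.2]].
    move=> qM; have [h1 h2 _] := H1 q qM; move: h1 h2; rewrite !inE.
    move=> /and3P[q1y q1x _] /and3P[q2y q2x _].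
    apply/disjoint_setsP => z; rewrite !inE /= => /orP[]/eqP-> /orP[]/eqP E;
      by move: q1y q1x q2y q2x; rewrite E eqxx.
  move=> p q; rewrite !inE => /orP[/eqP->|pM] /orP[/eqP->|qM]; first by rewrite eqxx.
  + by move=> _; apply: avoid.
  + by move=> _; rewrite disjoint_sym; apply: avoid.
  + exact: H2.
Qed.

Lemma matching_number_pendant (K : {set T}) x y :
  x \in K -> y \in K -> r x y -> x != y -> (forall z, z \in K -> r x z -> z = y) ->
  nu K = (nu (K :\ x :\ y)).+1.
Proof.
move=> xK yK rxy xy pendant; apply/eqP; rewrite eqn_leq matching_number_edge // andbT.
apply: leq_trans (matching_number_setD1 K y) _; rewrite ltnS.
rewrite -(@matching_number_isolated (K :\ y) x).
  by rewrite setD1C.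
move=> z; rewrite !inE => /andP[zy zK]; apply/negP => rxz.
by move: zy; rewrite (pendant _ zK rxz) eqxx.
Qed.

Lemma saturatedE (K : {set T}) v :
  v \in K -> saturated r K v <-> nu (K :\ v) < nu K.
Proof.
move=> vK; split.
- move=> sat; rewrite ltnNge; apply/negP => hle.
  have [M KvM eM] := matching_number_max (K :\ v).
  have [|p pM /orP vp] := sat M.
    split; first by apply/matchingP; apply: matchingbS KvM; apply: subsetDl.
    move=> M' /matchingP KM'; rewrite eM; apply: leq_trans hle.
    exact: leq_matching_number.
  move/matchingP: KvM => [H1 _]; have [h1 h2 _] := H1 p pM; move: h1 h2.
  by rewrite !inE; case: vp => /eqP <-; rewrite eqxx.
- move=> hlt M [KM Mmax].
  case: (boolP [exists p in M, (v == p.1) || (v == p.2)]).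
    by move=> /existsP[p /andP[pM vp]]; exists p.
  rewrite negb_exists => /forallP avoid; exfalso.
  have [M0 KM0 eM0] := matching_number_max K.
  have : nu K <= #|M| by rewrite -eM0; apply: Mmax; apply/matchingP.
  apply/negP; rewrite -ltnNge; apply: leq_ltn_trans hlt.
  apply: leq_matching_number; case: KM => H1 H2; apply/matchingP; split=> // p pM.
  have [h1 h2 h3] := H1 p pM; have := avoid p; rewrite pM /= negb_or.
  by case/andP=> a1 a2; rewrite !inE h1 h2 eq_sym a1 eq_sym a2.
Qed.

End MatchingNumber.

Lemma saturated_eq_in (T : finType) (r1 r2 : rel T) (K : {set T}) v :
  {in K &, r1 =2 r2} -> saturated r1 K v <-> saturated r2 K v.
Proof.
move=> e; have matchingE M : is_matching r1 K M <-> is_matching r2 K M.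
  split=> -[H1 H2]; split=> // p pM; have [h1 h2 h3] := H1 p pM.
    by split; rewrite // -e.
  by split; rewrite // e.
split=> sat M [KM Mmax]; apply: sat; split; try exact/matchingE.
- by move=> M' /matchingE; apply: Mmax.
- by move=> M' /matchingE; apply: Mmax.
Qed.

(* Acyclicity, in its 1-degenerate form. *)
Definition forest_on (T : finType) (r : rel T) (K : {set T}) : Prop :=
  forall S : {set T}, S \subset K -> S != set0 ->
    exists2 x, x \in S & #|[set y in S | r x y]| <= 1.

Lemma forest_onS (T : finType) (r : rel T) (K K' : {set T}) :
  K' \subset K -> forest_on r K -> forest_on r K'.
Proof. by move=> sKK forestK S sS; apply: forestK; apply: subset_trans sKK. Qed.

Section SkewAdjacency.
Variables (T : finType) (a : rel T).
Hypothesis a_oriented : oriented a.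
Local Open Scope ring_scope.
Local Notation G := (und a).
Local Notation sk := (Defs.skew a).

Lemma und_sym : symmetric G.
Proof. by move=> x y; rewrite /und orbC. Qed.

Lemma und_irr x : ~~ G x x.
Proof. by rewrite /und orbb; case: a_oriented. Qed.

Lemma skewN x y : sk y x = - sk x y.
Proof.
rewrite /Defs.skew; case: a_oriented => _ asym.
case axy: (a x y); first by rewrite (negbTE (asym _ _ axy)).
by case: (a y x); rewrite ?oppr0.
Qed.

Lemma skew_eq0 x y : ~~ G x y -> sk x y = 0.
Proof. by rewrite /und /Defs.skew negb_or => /andP[/negbTE-> /negbTE->]. Qed.

Lemma skewxx x : sk x x = 0.
Proof. exact/skew_eq0/und_irr. Qed.

Lemma skew_neq0 x y : G x y -> sk x y != 0.
Proof. by rewrite /und /Defs.skew; case: (a x y) => //= ->. Qed.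

Lemma skew_form0 (K : {pred T}) (f : T -> rat) :
  \sum_(k in K) \sum_(l in K) f k * (sk k l * f l) = 0.
Proof.
set s := \sum_(k in K) _; suff : s = - s by lra.
rewrite {1}/s exchange_big /= -sumrN; apply: eq_bigr => l _.
by rewrite -sumrN; apply: eq_bigr => k _; rewrite skewN; ring.
Qed.

(* On a forest these are
   the cases of v saturated and unsaturated ([forest_range]). *)
Definition delta_in_range (K : {set T}) v : Prop := exists f : T -> rat,
  forall u, u \in K -> \sum_(w in K) sk u w * f w = (u == v)%:R.

Definition column_in_range (K : {set T}) v : Prop := exists g : T -> rat,
  forall u, u \in K :\ v -> \sum_(w in K :\ v) sk u w * g w = sk u v.

Section IsolatedVertex.
Variables (K : {set T}) (x : T).
Hypotheses (xK : x \in K) (x_isolated : forall y, y \in K -> ~~ G x y).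

Let skew_isol u : u \in K -> sk u x = 0.
Proof. by move=> uK; apply: skew_eq0; rewrite und_sym x_isolated. Qed.

Let skew_isol' u : u \in K -> sk x u = 0.
Proof. by move=> uK; apply: skew_eq0; rewrite x_isolated. Qed.

Lemma column_in_range_isolated : column_in_range K x.
Proof.
exists (fun _ => 0) => u /setD1P[_ uK].
by rewrite skew_isol // big1 // => w _; rewrite mulr0.
Qed.

Lemma delta_in_range_isolated v :
  v != x -> delta_in_range (K :\ x) v -> delta_in_range K v.
Proof.
move=> vx [f hf]; exists f => u uK; rewrite (big_setD1 x xK) /= skew_isol // mul0r add0r.
case: (eqVneq u x) => [->|ux]; last by apply: hf; rewrite !inE ux.
rewrite eq_sym (negbTE vx) big1 // => w /setD1P[_ wK].
by rewrite skew_isol' ?mul0r.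
Qed.

Lemma column_in_range_isolated_other v :
  v \in K -> v != x -> column_in_range (K :\ x) v -> column_in_range K v.
Proof.
move=> vK vx [g hg]; have xKv : x \in K :\ v by rewrite !inE eq_sym vx xK.
exists g => u /setD1P[uv uK]; rewrite (big_setD1 x xKv) /= skew_isol // mul0r add0r.
rewrite -setD1C; case: (eqVneq u x) => [->|ux]; last by apply: hg; rewrite !inE ux uv.
rewrite skew_isol' // big1 // => w /setD1P[_ /setD1P[_ wK]].
by rewrite skew_isol' ?mul0r.
Qed.

End IsolatedVertex.

Section PendantVertex.
Variables (K : {set T}) (x y : T).
Hypotheses (xK : x \in K) (yK : y \in K) (Gxy : G x y).
Hypothesis x_pendant : forall z, z \in K -> G x z -> z = y.

Let xy : x != y. Proof. by apply: contraTneq Gxy => ->; rewrite und_irr. Qed.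
Let yKx : y \in K :\ x. Proof. by rewrite !inE eq_sym xy yK. Qed.
Let skyx : sk y x != 0. Proof. by rewrite skew_neq0 // und_sym. Qed.
Let skxy : sk x y != 0. Proof. by rewrite skew_neq0. Qed.

Let skew_pend u : u \in K -> u != y -> sk u x = 0.
Proof.
move=> uK uy; apply: skew_eq0; rewrite und_sym; apply: contra uy => Gxu.
by rewrite (x_pendant uK Gxu).
Qed.

Let skew_pend' u : u \in K -> u != y -> sk x u = 0.
Proof. by move=> uK uy; rewrite skewN skew_pend // oppr0. Qed.

Lemma delta_in_range_neighbour : delta_in_range K y.
Proof.
exists (fun w => if w == x then (sk y x)^-1 else 0) => u uK.
rewrite (big_setD1 x xK) /= eqxx big1 => [|w /setD1P[/negbTE-> _]]; last by rewrite mulr0.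
rewrite addr0; case: (eqVneq u y) => [->|uy]; first by rewrite mulfV.
by rewrite skew_pend // mul0r.
Qed.

Lemma delta_in_range_pendant : column_in_range (K :\ x) y -> delta_in_range K x.
Proof.
move=> [g hg]; set t := (sk x y)^-1.
exists (fun w => if w == x then 0 else if w == y then t else - t * g w) => u uK.
rewrite (big_setD1 x xK) eqxx /= mulr0 add0r (big_setD1 y yKx) /=.
rewrite eq_sym (negbTE xy) eqxx.
rewrite (eq_bigr (fun w => - t * (sk u w * g w))); last first.
  by move=> w /setD1P[/negbTE-> /setD1P[/negbTE-> _]]; ring.
rewrite -mulr_sumr; case: (eqVneq u x) => [->|ux].
  rewrite big1 ?mulr0 ?addr0 ?mulfV // => w /setD1P[wy /setD1P[_ wK]].
  by rewrite skew_pend' ?mul0r.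
case: (eqVneq u y) => [->|uy].
  suff -> : \sum_(w in K :\ x :\ y) sk y w * g w = 0 by rewrite skewxx mulr0 mul0r addr0.
  transitivity (- \sum_(w in K :\ x :\ y) \sum_(l in K :\ x :\ y) g w * (sk w l * g l)).
    rewrite -sumrN; apply: eq_bigr => w wK.
    by rewrite -mulr_sumr (hg w wK) skewN; ring.
  by rewrite skew_form0 oppr0.
have uK' : u \in K :\ x :\ y by rewrite !inE ux uy.
by rewrite (hg u uK') mulNr mulrC addrN.
Qed.

Lemma column_in_range_pendant : delta_in_range (K :\ x) y -> column_in_range K x.
Proof.
move=> [f hf]; exists (fun w => sk y x * f w) => u /setD1P[ux uK].
rewrite (eq_bigr (fun w => sk y x * (sk u w * f w))) => [|w _]; last by ring.
rewrite -mulr_sumr hf ?inE ?ux //.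
by case: (eqVneq u y) => [->|uy]; rewrite ?mulr1 // mulr0 skew_pend.
Qed.

Section OtherVertex.
Variable v : T.
Hypotheses (vx : v != x) (vy : v != y).

Lemma delta_in_range_pendant_other :
  delta_in_range (K :\ x :\ y) v -> delta_in_range K v.
Proof.
move=> [f hf]; set al := - (\sum_(w in K :\ x :\ y) sk y w * f w) / sk y x.
exists (fun w => if w == x then al else if w == y then 0 else f w) => u uK.
rewrite (big_setD1 x xK) (big_setD1 y yKx) /= eqxx eq_sym (negbTE xy) eqxx mulr0 add0r.
rewrite (eq_bigr (fun w => sk u w * f w)); last first.
  by move=> w /setD1P[/negbTE-> /setD1P[/negbTE-> _]].
case: (eqVneq u x) => [->|ux].
  rewrite skewxx mul0r add0r big1; first by rewrite eq_sym (negbTE vx).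
  by move=> w /setD1P[wy /setD1P[_ wK]]; rewrite skew_pend' ?mul0r.
case: (eqVneq u y) => [->|uy].
  by rewrite /al mulrC mulfVK // addNr eq_sym (negbTE vy).
by rewrite skew_pend // mul0r add0r hf // !inE ux uy.
Qed.

Lemma column_in_range_pendant_other :
  v \in K -> column_in_range (K :\ x :\ y) v -> column_in_range K v.
Proof.
move=> vK [g hg]; set al := (sk y v - \sum_(w in K :\ x :\ y :\ v) sk y w * g w) / sk y x.
have xKv : x \in K :\ v by rewrite !inE eq_sym vx xK.
have yKvx : y \in K :\ v :\ x by rewrite !inE eq_sym xy eq_sym vy yK.
exists (fun w => if w == x then al else if w == y then 0 else g w) => u /setD1P[uv uK].
rewrite (big_setD1 x xKv) (big_setD1 y yKvx) /= eqxx eq_sym (negbTE xy) eqxx mulr0 add0r.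
have -> : K :\ v :\ x :\ y = K :\ x :\ y :\ v by rewrite (setD1C K) (setD1C (K :\ x)).
rewrite (eq_bigr (fun w => sk u w * g w)); last first.
  by move=> w /setD1P[_ /setD1P[/negbTE-> /setD1P[/negbTE-> _]]].
case: (eqVneq u x) => [->|ux].
  rewrite skewxx mul0r add0r skew_pend' // big1 // => w.
  by case/setD1P=> _ /setD1P[wy /setD1P[_ wK]]; rewrite skew_pend' ?mul0r.
case: (eqVneq u y) => [->|uy]; first by rewrite /al mulrC mulfVK // addrNK.
by rewrite skew_pend // mul0r add0r hg // !inE uv ux uy.
Qed.

End OtherVertex.
End PendantVertex.

Local Close Scope ring_scope.
Local Notation nu := (matching_number G).

Definition saturation_range (K : {set T}) : Prop := forall v, v \in K ->
  (nu (K :\ v) < nu K -> delta_in_range K v) /\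
  (nu K <= nu (K :\ v) -> column_in_range K v).

Lemma saturation_range_isolated (K : {set T}) x :
  x \in K -> (forall y, y \in K -> ~~ G x y) ->
  saturation_range (K :\ x) -> saturation_range K.
Proof.
move=> xK x_isol IH v vK; have nuKx := matching_number_isolated und_sym x_isol.
have [->|vx] := eqVneq v x.
  by split=> [|_]; [rewrite nuKx ltnn | exact: column_in_range_isolated].
have vKx : v \in K :\ x by rewrite !inE vx.
have [IH1 IH2] := IH v vKx.
have nuKxv : nu (K :\ x :\ v) = nu (K :\ v).
  rewrite setD1C (matching_number_isolated und_sym) // => y /setD1P[_ yK].
  exact: x_isol.
split=> hv.
  by apply: (delta_in_range_isolated xK x_isol) => //; apply: IH1; rewrite nuKxv nuKx.
by apply: (column_in_range_isolated_other xK x_isol) => //; apply: IH2; rewrite nuKxv nuKx.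
Qed.

Lemma saturation_range_pendant (K : {set T}) x y :
  x \in K -> y \in K -> G x y -> (forall z, z \in K -> G x z -> z = y) ->
  saturation_range (K :\ x) -> saturation_range (K :\ x :\ y) ->
  saturation_range K.
Proof.
move=> xK yK Gxy x_pendant IHx IHxy v vK.
have xy : x != y by apply: contraTneq Gxy => ->; rewrite und_irr.
have nuK := matching_number_pendant und_sym xK yK Gxy xy x_pendant.
have nuKy : nu (K :\ y) = nu (K :\ x :\ y).
  rewrite setD1C (matching_number_isolated und_sym (K := K :\ y) (x := x)) //.
  by move=> z /setD1P[zy zK]; apply: contra zy => /(x_pendant _ zK) ->.
have [->|vy] := eqVneq v y.
  split=> [_|]; last by rewrite nuK nuKy ltnn.
  exact: (delta_in_range_neighbour xK Gxy x_pendant).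
have [->|vx] := eqVneq v x.
  have yKx : y \in K :\ x by rewrite !inE eq_sym xy.
  have [IH1 IH2] := IHx y yKx.
  split=> hx.
    apply: (delta_in_range_pendant xK yK Gxy x_pendant); apply: IH2.
    by rewrite -ltnS -nuK.
  by apply: (column_in_range_pendant x_pendant); apply: IH1; rewrite -nuK.
have vKxy : v \in K :\ x :\ y by rewrite !inE vx vy.
have [IH1 IH2] := IHxy v vKxy.
have nuKv : nu (K :\ v) = (nu (K :\ x :\ y :\ v)).+1.
  have xKv : x \in K :\ v by rewrite !inE eq_sym vx.
  have yKv : y \in K :\ v by rewrite !inE eq_sym vy.
  rewrite (matching_number_pendant und_sym xKv yKv Gxy xy) => [|z /setD1P[_ zK]].
    by rewrite (setD1C K) (setD1C (K :\ x)).
  exact: x_pendant.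
split=> hv.
  apply: (delta_in_range_pendant_other xK yK Gxy x_pendant) => //; apply: IH1.
  by rewrite -ltnS -nuKv -nuK.
apply: (column_in_range_pendant_other xK yK Gxy x_pendant) => //; apply: IH2.
by rewrite -ltnS -nuKv -nuK.
Qed.

Lemma forest_range (K : {set T}) : forest_on G K -> saturation_range K.
Proof.
move: {2}#|K| (leqnn #|K|) => n; elim: n K => [|n IH] K.
  by rewrite leqn0 cards_eq0 => /eqP-> _ v; rewrite inE.
move=> sizeK forestK; have [->|K0] := eqVneq K set0; first by move=> v; rewrite inE.
have smaller z : z \in K -> #|K :\ z| <= n.
  by move=> zK; move: sizeK; rewrite (cardsD1 z K) zK add1n ltnS.
have forestKx z := forest_onS (subsetDl K [set z]) forestK.
have [x xK deg_x] := forestK K (subxx K) K0.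
have [deg0|deg_pos] := posnP #|[set y in K | G x y]|.
  apply: (saturation_range_isolated xK); last exact: IH (smaller x xK) (forestKx x).
  move=> y yK; apply/negP => Gxy; move/eqP: deg0; rewrite cards_eq0.
  by move/eqP/setP/(_ y); rewrite !inE yK Gxy.
have /cards1P[y Nx] : #|[set y in K | G x y]| == 1 by rewrite eqn_leq deg_x deg_pos.
have /setIdP[yK Gxy] : y \in [set y in K | G x y] by rewrite Nx set11.
have x_pendant z : z \in K -> G x z -> z = y.
  by move=> zK Gxz; apply/set1P; rewrite -Nx inE zK Gxz.
apply: (saturation_range_pendant xK yK Gxy x_pendant); first exact: IH (smaller x xK) (forestKx x).
apply: IH (forest_onS (subsetDl _ [set y]) (forestKx x)).
by apply: leq_trans (smaller x xK); rewrite subset_leq_card // subsetDl.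
Qed.

End SkewAdjacency.

Section SpanningForests.
Variables (T : finType) (r : rel T).
Hypothesis r_sym : symmetric r.

Definition arcs (X : {set T}) : {set T * T} :=
  [set p | [&& p.1 \in X, p.2 \in X & r p.1 p.2]].

Lemma card_arcs (S : {set T}) : #|arcs S| = \sum_(x in S) #|[set y in S | r x y]|.
Proof.
rewrite (eq_bigr (fun x => \sum_(y | (y \in S) && r x y) 1)); last first.
  by move=> x _; rewrite sum1dep_card.
rewrite pair_big_dep /= sum1dep_card; apply: eq_card => -[x y].
by rewrite !inE andbA.
Qed.

Variables U S : {set T}.

(* [p] sends every vertex of [U] outside [S] to a neighbour of smaller rank
   [d]; its arcs [u -- p u] form a spanning forest of [U] rooted in [S]. *)
Definition spanning_parent (d : T -> nat) (p : T -> T) : Prop :=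
  forall u, u \in U :\: S -> [/\ p u \in U, r u (p u) & d (p u) < d u].

Definition parent_arcs (p : T -> T) : {set T * T} :=
  [set (u, p u) | u in U :\: S] :|: [set (p u, u) | u in U :\: S].

Hypothesis SU : S \subset U.

Lemma arcs_spanning (X : {set T * T}) (d : T -> nat) (p : T -> T) :
  spanning_parent d p -> X \subset arcs U -> [disjoint X & arcs S] ->
  [disjoint X & parent_arcs p] ->
  #|arcs S| + 2 * #|U :\: S| + #|X| <= #|arcs U|.
Proof.
move=> hp XU XS XP.
set I1 := [set (u, p u) | u in U :\: S]; set I2 := [set (p u, u) | u in U :\: S].
have c1 : #|I1| = #|U :\: S| by apply: card_in_imset => u v _ _ [].
have c2 : #|I2| = #|U :\: S| by apply: card_in_imset => u v _ _ [].
have d12 : [disjoint I1 & I2].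
  apply/disjoint_setsP => q /imsetP[u uUS ->] /imsetP[w wUS [e1 e2]].
  have [_ _ h1] := hp u uUS; have [_ _ h2] := hp w wUS.
  by move: h1 h2; rewrite -e1 -e2 => h1 /(ltn_trans h1); rewrite ltnn.
have dS : [disjoint arcs S & I1 :|: I2].
  apply/disjoint_setsP => q /setIdP[q1 /andP[q2 _]].
  case/setUP => /imsetP[u /setDP[_ uS] eq]; move: q1 q2; rewrite eq /=.
    by move=> uS'; rewrite uS' in uS.
  by move=> _ uS'; rewrite uS' in uS.
have sub : arcs S :|: (I1 :|: I2) :|: X \subset arcs U.
  apply/subsetP => q; rewrite !inE => /orP[/orP[|]|].
  - by case/and3P => q1 q2 ->; rewrite (subsetP SU _ q1) (subsetP SU _ q2).
  - case/orP => /imsetP[u uUS ->] /=; have [h1 h2 _] := hp u uUS;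
      by move/setDP: uUS => [uU _]; rewrite h1 uU //= r_sym.
  - by move/(subsetP XU); rewrite inE.
have := subset_leq_card sub; rewrite !cardsU_disjoint ?c1 ?c2 //; first lia.
rewrite disjoint_sym; apply/disjoint_setsP => q qX /setUP[].
  exact: disjoint_setsP XS q qX.
exact: disjoint_setsP XP q qX.
Qed.

Lemma arcs_spanning_set0 (d : T -> nat) (p : T -> T) :
  spanning_parent d p -> #|arcs S| + 2 * #|U :\: S| <= #|arcs U|.
Proof.
have set0_disj (A : {set T * T}) : [disjoint set0 & A] by rewrite -setI_eq0 set0I.
by move=> hp; have := arcs_spanning hp (sub0set _); rewrite cards0 addn0; apply.
Qed.

Hypothesis U_closed : forall x y, x \in U -> r x y -> y \in U.
Hypothesis U_reachable : forall u, u \in U -> exists2 s, s \in S & connect r s u.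

Fixpoint bfs_layer n : {set T} :=
  if n is m.+1 then bfs_layer m :|: [set x in U | [exists y in bfs_layer m, r y x]]
  else S.

Lemma bfs_layer_sub n : bfs_layer n \subset U.
Proof.
elim: n => //= n IH; apply/subsetP => x; rewrite !inE => /orP[/(subsetP IH)//|].
by case/andP.
Qed.

Lemma bfs_layer_path q x m :
  x \in bfs_layer m -> path r x q -> last x q \in bfs_layer (m + size q).
Proof.
elim: q x m => [|y q IHq] x m /=; first by rewrite addn0.
move=> xm /andP[rxy pq]; rewrite -addSnnS; apply: IHq pq => /=.
rewrite !inE (U_closed (subsetP (bfs_layer_sub m) _ xm) rxy) /=; apply/orP; right.
by apply/existsP; exists x; rewrite xm.
Qed.

(* The rank of a vertex is its breadth-first distance from [S]. *)
Lemma spanning_parent_exists : exists d p, spanning_parent d p.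
Proof.
have hd u : exists n, u \in U ->
    u \in bfs_layer n /\ forall m, u \in bfs_layer m -> n <= m.
  have [uU|] := boolP (u \in U); last by exists 0.
  have [s sS /connectP[q pq ->]] := U_reachable uU.
  have [|n hn hmin] := ex_minnP (P := fun n => last s q \in bfs_layer n).
    by exists (0 + size q); apply: bfs_layer_path.
  by exists n.
have [d hdd] := fin_all_exists hd.
have hp u : exists y, u \in U :\: S -> [/\ y \in U, r u y & d y < d u].
  have [/setDP[uU uS]|] := boolP (u \in U :\: S); last by exists u.
  have [] := hdd u uU; case: (d u) => [|m] /= ; first by rewrite (negbTE uS).
  rewrite inE => /orP[um min_u|]; first by have := min_u _ um; rewrite ltnn.
  rewrite inE => /andP[_ /existsP[y /andP[ym ryu]]] _.
  have yU := subsetP (bfs_layer_sub m) _ ym.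
  exists y => _; split; rewrite 1?r_sym //.
  by have [_ min_y] := hdd y yU; rewrite ltnS; apply: min_y.
have [p hpp] := fin_all_exists hp.
by exists d, p.
Qed.

End SpanningForests.

Section UnicyclicStructure.
Variables (T : finType) (a : rel T) (c : seq T).
Hypotheses (a_oriented : oriented a) (a_connected : connected_graph a).
Hypotheses (a_edges : n_edges a = #|T|) (c_cycle : is_graph_cycle a c).

Local Notation G := (und a).
Local Notation H := (del_cycle_edges a c).
Local Notation C := (cycle_verts c).

Let c_uniq : uniq c. Proof. by case: c_cycle. Qed.

Lemma card_cycle_verts : #|C| = size c.
Proof. by rewrite cardsE; apply/card_uniqP. Qed.

Lemma next_next_neq x : x \in c -> next c (next c x) != x.
Proof.
move=> xc; have [i q e] := rot_to xc; rewrite -!(next_rot i c_uniq) e.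
have [_ size_c _] := c_cycle; move: size_c; rewrite -(size_rot i) e.
move: c_uniq; rewrite -(rot_uniq i) e.
case: q {e} => [|y [|z q]] //= /and3P[]; rewrite !inE !negb_or => /and3P[xy xz _].
by move=> /andP[yz _] _ _; rewrite /next /= eqxx [y == x]eq_sym (negbTE xy) eqxx eq_sym.
Qed.

Lemma und_next x : x \in c -> G x (next c x).
Proof. by have [_ _ cycG] := c_cycle; apply: next_cycle. Qed.

Lemma und_prev x : x \in c -> G (prev c x) x.
Proof. by rewrite -mem_prev => /und_next; rewrite (next_prev c_uniq). Qed.

Lemma del_cycle_edges_sym : symmetric H.
Proof.
move=> x y; rewrite /del_cycle_edges /cycle_edge und_sym; congr (_ && ~~ _).
by rewrite andbCA orbC.
Qed.

Lemma del_cycle_edges_und x y : H x y -> G x y.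
Proof. by case/andP. Qed.

Definition cycle_arcs : {set T * T} := [set q | cycle_edge c q.1 q.2].

Lemma cycle_arcs_sub : cycle_arcs \subset arcs G C.
Proof.
apply/subsetP => -[x y]; rewrite !inE /cycle_edge /= => /and3P[xc yc /orP[]/eqP<-].
  by rewrite xc mem_next xc und_next.
by rewrite yc mem_next yc und_sym und_next.
Qed.

Lemma disjoint_cycle_arcs (X : {set T}) : [disjoint arcs H X & cycle_arcs].
Proof.
apply/disjoint_setsP => -[x y]; rewrite !inE /= /del_cycle_edges.
by case/and3P=> _ _ /andP[_ /negbTE->].
Qed.

Lemma card_cycle_arcs : 2 * size c <= #|cycle_arcs|.
Proof.
set I1 := [set (x, next c x) | x in C]; set I2 := [set (next c x, x) | x in C].
have c1 : #|I1| = size c.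
  by rewrite card_in_imset ?card_cycle_verts // => u v _ _ [].
have c2 : #|I2| = size c.
  by rewrite card_in_imset ?card_cycle_verts // => u v _ _ [].
have d12 : [disjoint I1 & I2].
  apply/disjoint_setsP => q /imsetP[u _ ->] /imsetP[w wc [e1 e2]].
  by rewrite inE in wc; move: (next_next_neq wc); rewrite -e1 e2 eqxx.
have : I1 :|: I2 \subset cycle_arcs.
  apply/subsetP => q; rewrite inE => /orP[] /imsetP[u uc ->]; rewrite inE in uc;
    by rewrite !inE /cycle_edge /= mem_next uc eqxx ?orbT.
by move/subset_leq_card; rewrite cardsU_disjoint // c1 c2 addnn mul2n.
Qed.

Lemma card_arcs_und : #|arcs G setT| = 2 * #|T|.
Proof.
set A := [set q : T * T | a q.1 q.2]; set sw := fun q : T * T => (q.2, q.1).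
have swK : involutive sw by case.
have -> : arcs G setT = A :|: sw @: A.
  apply/setP => -[x y]; rewrite !inE /und /=; congr (_ || _).
  apply/idP/imsetP => [ayx|[[u w] auw [-> ->]]]; last by rewrite inE in auw.
  by exists (y, x); rewrite ?inE.
rewrite cardsU_disjoint ?card_imset; first by rewrite -a_edges addnn mul2n.
  exact: inv_inj.
apply/disjoint_setsP => -[x y]; rewrite inE => /= axy /imsetP[[u w]].
rewrite inE /= => auw [e1 e2].
by case: a_oriented => _ asym; move: (asym _ _ axy); rewrite e1 e2 auw.
Qed.

Lemma und_spanning_parent (S : {set T}) :
  S != set0 -> exists d p, spanning_parent G [set: T] S d p.
Proof.
case/set0Pn => s sS; apply: spanning_parent_exists => //; first exact: und_sym.
by move=> u _; exists s => //; apply: a_connected.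
Qed.

Lemma arcs_und_spanning (S : {set T}) (X : {set T * T}) d p :
  spanning_parent G [set: T] S d p -> X \subset arcs G setT ->
  [disjoint X & arcs G S] -> [disjoint X & parent_arcs [set: T] S p] ->
  #|arcs G S| + 2 * (#|T| - #|S|) + #|X| <= 2 * #|T|.
Proof.
move=> hp XT XS XP; rewrite -card_arcs_und -{1}(cardsC S) addKn -setTD.
exact: (arcs_spanning (@und_sym _ a) (subsetT S) hp XT XS XP).
Qed.

(* Counting arcs: the cycle contributes 2|C| arcs outside H and every vertex
   outside U :|: C needs two more, while G has only 2|T| arcs. *)
Lemma arcs_del_cycle_bound (U : {set T}) :
  #|arcs H U| + 2 * #|U :&: C| <= 2 * #|U|.
Proof.
have HC : #|arcs H U| + #|cycle_arcs| <= #|arcs G (U :|: C)|.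
  rewrite -cardsU_disjoint ?disjoint_cycle_arcs //; apply/subset_leq_card/subsetP => q.
  case/setUP => [|/(subsetP cycle_arcs_sub)]; rewrite !inE.
    by case/and3P=> -> -> /del_cycle_edges_und ->.
  by case/and3P=> -> -> ->; rewrite !orbT.
have UC0 : U :|: C != set0.
  have [_ size_c _] := c_cycle; apply/set0Pn.
  by case: c size_c => // x q _; exists x; rewrite !inE eqxx orbT.
have [d [p hp]] := und_spanning_parent UC0.
have := arcs_spanning_set0 (@und_sym _ a) (subsetT _) hp.
rewrite card_arcs_und setTD; have := cardsC (U :|: C).
have := card_cycle_arcs; have := cardsU U C; rewrite card_cycle_verts.
have := max_card (mem (U :|: C)); have := subset_leq_card (subsetIl U C).
lia.
Qed.

Lemma connect_del_cycle_edges_cycle v w :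
  v \in c -> w \in c -> connect H v w -> v = w.
Proof.
move=> vc wc vw; apply/eqP/negPn/negP => v_neq_w.
set U := [set u | connect H v u].
have vU : v \in U by rewrite inE connect0.
have vU1 : [set v] \subset U by rewrite sub1set.
have [d [p hp]] : exists d p, spanning_parent H U [set v] d p.
  apply: spanning_parent_exists vU1 _ _; first exact: del_cycle_edges_sym.
    by move=> x y; rewrite !inE => vx /connect1; apply: connect_trans.
  by move=> u; rewrite inE => vu; exists v; rewrite ?set11.
have := arcs_spanning_set0 del_cycle_edges_sym vU1 hp.
have UC2 : 2 <= #|U :&: C|.
  have : [set v; w] \subset U :&: C.
    apply/subsetP => z; rewrite !inE => /orP[]/eqP->; rewrite ?vc ?wc ?connect0 //.
    by rewrite vw.
  by move/subset_leq_card; rewrite cards2 v_neq_w.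
have := arcs_del_cycle_bound U; have := cardsD U [set v].
have := subset_leq_card (subsetIl U C); rewrite (setIidPr vU1) cards1.
lia.
Qed.

(* Take a cycle vertex [u] of maximal rank and a cycle neighbour [z] that is
   not its parent; the parent of [z] is not [u] either, as [z] has rank at
   most that of [u]. *)
Lemma spanning_parent_misses_cycle_edge (S : {set T}) d p :
  spanning_parent G [set: T] S d p -> [disjoint S & C] ->
  exists u z, [/\ u \in c, z \in c, G u z, z != p u & p z != u].
Proof.
move=> hp SC; have Sc x : x \in c -> x \in [set: T] :\: S.
  move=> xc; rewrite !inE andbT; apply/negP => xS.
  by apply: (disjoint_setsP _ _ SC x xS); rewrite inE.
have [x0 x0c] : exists x0, x0 \in c.
  by have [_ + _] := c_cycle; case: c => // x0 q _; exists x0; rewrite mem_head.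
have [u uc' umax] := @arg_maxnP _ x0 (mem c) d x0c; have uc : u \in c := uc'.
set z := if next c u == p u then prev c u else next c u.
have zc : z \in c by rewrite /z; case: ifP; rewrite ?mem_prev ?mem_next.
exists u, z; split=> //.
- by rewrite /z; case: ifP => _; [rewrite und_sym und_prev | rewrite und_next].
- rewrite /z; case: ifP => [/eqP <-|/negbT //].
  by rewrite -mem_prev in uc; have := next_next_neq uc; rewrite (next_prev c_uniq) eq_sym.
- apply/eqP => pz_u; have [_ _] := hp z (Sc z zc).
  by rewrite pz_u => /leq_trans/(_ (umax z zc)); rewrite ltnn.
Qed.

Lemma arcs_und_off_cycle (S : {set T}) :
  S != set0 -> [disjoint S & C] -> #|arcs G S| < 2 * #|S|.
Proof.
move=> S0 SC; have [d [p hp]] := und_spanning_parent S0.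
have [u [z [uc zc Guz z_nparent pz]]] := spanning_parent_misses_cycle_edge hp SC.
have uS : u \notin S.
  by apply/negP => uS; apply: (disjoint_setsP _ _ SC u uS); rewrite inE.
set X := [set (u, z); (z, u)].
have cardX : #|X| = 2.
  rewrite cards2; case: eqP => // -[uz]; move: Guz.
  by rewrite -uz (negbTE (und_irr a_oriented u)).
have XG : X \subset arcs G setT.
  by apply/subsetP => q; rewrite !inE => /orP[]/eqP-> /=; rewrite ?Guz // und_sym.
have XS : [disjoint X & arcs G S].
  by apply/disjoint_setsP => q; rewrite !inE => /orP[]/eqP-> /=; rewrite (negbTE uS) ?andbF.
have XP : [disjoint X & parent_arcs [set: T] S p].
  apply/disjoint_setsP => q; rewrite !inE => /orP[]/eqP-> /orP[] /imsetP[w _ [e1 e2]].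
  - by move: z_nparent; rewrite e1 e2 eqxx.
  - by move: pz; rewrite e2 e1 eqxx.
  - by move: pz; rewrite e1 e2 eqxx.
  - by move: z_nparent; rewrite e1 e2 eqxx.
have := arcs_und_spanning hp XG XS XP; rewrite cardX.
have := max_card (mem S); move: #|arcs G S| #|S| #|T| => nA nS nT; clear; lia.
Qed.

Lemma forest_del_cycle_edges : forest_on H [set: T].
Proof.
move=> S _ S0.
have [/exists_inP[x xS degx]|] := boolP [exists x in S, #|[set y in S | H x y]| <= 1].
  by exists x.
rewrite negb_exists_in => /forall_inP deg2; exfalso.
have arcsS : 2 * #|S| <= #|arcs H S|.
  rewrite card_arcs mulnC -sum_nat_const; apply: leq_sum => x xS.
  by rewrite ltnNge deg2.
have [SC0|/set0Pn[x xSC]] := eqVneq (S :&: C) set0.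
  have : #|arcs H S| <= #|arcs G S|.
    apply/subset_leq_card/subsetP => q; rewrite !inE.
    by case/and3P=> -> -> /del_cycle_edges_und ->.
  have := arcs_und_off_cycle S0; rewrite -setI_eq0 SC0 eqxx => /(_ isT).
  lia.
have := arcs_del_cycle_bound S.
have : 0 < #|S :&: C| by apply/card_gt0P; exists x.
lia.
Qed.

Local Notation Tv v := (rooted_tree a c v).

Lemma rooted_tree_root v : v \in Tv v.
Proof. by rewrite inE connect0. Qed.

Lemma rooted_tree_cycle v x : v \in c -> x \in c -> x \in Tv v -> x = v.
Proof.
by move=> vc xc; rewrite inE => vx; apply/esym/connect_del_cycle_edges_cycle.
Qed.

Lemma rooted_tree_boundary v x y :
  v \in c -> x \in Tv v -> y \notin Tv v -> G x y -> x = v /\ y \in c.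
Proof.
move=> vc xT yT Gxy; have [/and3P[xc yc _]|not_cyc] := boolP (cycle_edge c x y).
  by split=> //; apply: rooted_tree_cycle.
move: yT; rewrite !inE in xT *.
by rewrite (connect_trans xT (connect1 (_ : H x y))) // /del_cycle_edges Gxy.
Qed.

Lemma rooted_trees_disjoint v w u :
  v \in c -> w \in c -> v != w -> u \in Tv v -> u \notin Tv w.
Proof.
move=> vc wc vw; rewrite !inE => vu; apply/negP => wu.
have : connect H v w.
  by apply: connect_trans vu _; rewrite (sym_connect_sym del_cycle_edges_sym).
by move/(connect_del_cycle_edges_cycle vc wc)/eqP; rewrite (negbTE vw).
Qed.

Lemma rooted_tree_und v : v \in c -> {in Tv v &, G =2 H}.
Proof.
move=> vc x y xT yT; apply/idP/idP => [Gxy|/del_cycle_edges_und //].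
rewrite /del_cycle_edges Gxy /=; apply/negP => /and3P[xc yc _].
by move: Gxy; rewrite (rooted_tree_cycle vc xc xT) (rooted_tree_cycle vc yc yT) (negbTE (und_irr a_oriented v)).
Qed.

Lemma forest_rooted_tree v : v \in c -> forest_on G (Tv v).
Proof.
move=> vc S sS S0; have [x xS degx] := forest_del_cycle_edges (subsetT S) S0.
exists x => //; rewrite (eq_card (B := [set y in S | H x y])) // => y; rewrite !inE.
by case: (boolP (y \in S)) => //= yS; rewrite (rooted_tree_und vc (subsetP sS _ xS) (subsetP sS _ yS)).
Qed.

End UnicyclicStructure.

Section SkewRankSplit.
Local Open Scope ring_scope.
Variables (F : fieldType) (n : nat) (P R A X : 'M[F]_n).
Hypotheses (PP : P *m P = P) (RR : R *m R = R) (PR : P *m R = 0) (RP : R *m P = 0).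
Hypotheses (PRI : P + R = 1%:M) (Pt : P^T = P) (Rt : R^T = R) (At : A^T = - A).
Hypothesis off_block : P *m A *m R = (P *m A *m P) *m X.
Hypothesis isotropic : X^T *m (P *m A *m P) *m X = 0.

Local Notation A1 := (P *m A *m P).
Local Notation A2 := (R *m A *m R).
Local Notation B := (P *m A *m R).
Local Notation Y := (P *m X *m R).

Let A1Y : A1 *m Y = B.
Proof. by rewrite !mulmxA -[A1 *m P]mulmxA PP -off_block -mulmxA RR. Qed.

Let YA1Y : Y^T *m A1 *m Y = 0.
Proof.
rewrite !trmx_mul Pt Rt !mulmxA -[R *m _ *m P *m P]mulmxA PP -[_ *m P *m P]mulmxA PP.
suff -> : R *m X^T *m P *m A *m P *m X = R *m (X^T *m A1 *m X) by rewrite isotropic mulmx0 mul0mx.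
by rewrite !mulmxA.
Qed.

Let A_blocks : A = A1 + B + R *m A *m P + A2.
Proof.
have e : A = (P + R) *m A *m (P + R) by rewrite PRI mul1mx mulmx1.
by rewrite {1}e !mulmxDl !mulmxDr !addrA.
Qed.

Let RAP : R *m A *m P = - B^T.
Proof. by rewrite !trmx_mul Rt Pt At mulNmx mulmxN opprK mulmxA. Qed.

Let AY : A *m Y = B.
Proof.
have A1t : A1^T = - A1 by rewrite !trmx_mul Pt At mulNmx mulmxN mulmxA.
rewrite {1}A_blocks !mulmxDl A1Y RAP.
have -> : B *m Y = 0 by rewrite !mulmxA -[B *m P]mulmxA RP mulmx0 !mul0mx.
have -> : A2 *m Y = 0 by rewrite !mulmxA -[A2 *m P]mulmxA RP mulmx0 !mul0mx.
have -> : - B^T *m Y = 0 by rewrite -A1Y (trmx_mul A1 Y) A1t mulmxN opprK YA1Y.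
by rewrite !addr0.
Qed.

Let YY : Y *m Y = 0.
Proof. by rewrite !mulmxA -[P *m X *m R *m P]mulmxA RP mulmx0 !mul0mx. Qed.

Let congruence_diag : (1%:M - Y)^T *m A *m (1%:M - Y) = A1 + A2.
Proof.
have YtA : Y^T *m A = - B^T by rewrite -AY (trmx_mul A Y) At mulmxN opprK.
have YtAY : Y^T *m A *m Y = 0 by rewrite -mulmxA AY -A1Y mulmxA YA1Y.
rewrite [(1%:M - Y)^T]linearB /= trmx1 !mulmxBl !mulmxBr !mul1mx !mulmx1.
rewrite YtAY AY YtA {1}A_blocks RAP; apply/matrixP => i j; rewrite !mxE.
by move: (\sum_j0 _) (\sum_j0 _) (\sum_j0 _) (\sum_j0 _) => x1 x2 x3 x4; ring.
Qed.

Let unipotent_unit : (1%:M - Y) \in unitmx.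
Proof.
have : (1%:M - Y) *m (1%:M + Y) = 1%:M.
  by rewrite mulmxBl !mulmxDr YY !mul1mx mulmx1 addr0 addrK.
by case/mulmx1_unit.
Qed.

Lemma rank_skew_block_split : \rank A = (\rank A1 + \rank A2)%N.
Proof.
have -> : \rank A = \rank (A1 + A2)%R.
  rewrite -congruence_diag mxrankMfree ?row_free_unit //.
  rewrite -[in RHS]mxrank_tr trmx_mul trmxK mxrankMfree ?row_free_unit //.
  by rewrite At mxrank_opp.
have e1 : A1 = P *m (A1 + A2) by rewrite mulmxDr !mulmxA PP PR !mul0mx addr0.
have e2 : A2 = R *m (A1 + A2) by rewrite mulmxDr !mulmxA RR RP !mul0mx add0r.
rewrite -mxrank_disjoint_sum.
  apply/eqmx_rank/andP; split; first by apply: addmx_sub_adds; apply: submx_refl.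
  by rewrite addsmx_sub; apply/andP; split; [rewrite {1}e1 | rewrite {1}e2]; apply: submxMl.
set Z := (A1 :&: A2)%MS.
have /submxP [D1 ZA1] : (Z <= A1)%MS := capmxSl _ _.
have /submxP [D2 ZA2] : (Z <= A2)%MS := capmxSr _ _.
have ZR0 : Z *m R = 0 by rewrite ZA1 -!mulmxA PR !mulmx0.
have ZR : Z *m R = Z by rewrite ZA2 -!mulmxA RR.
by rewrite -ZR ZR0.
Qed.

End SkewRankSplit.

Section VertexMatrices.
Local Open Scope ring_scope.
Variable T : finType.

Definition fun_mx (F : T -> T -> rat) : 'M[rat]_#|T| :=
  \matrix_(i, j) F (enum_val i) (enum_val j).

Lemma eq_fun_mx (F1 F2 : T -> T -> rat) : F1 =2 F2 -> fun_mx F1 = fun_mx F2.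
Proof. by move=> eF; apply/matrixP => i j; rewrite !mxE eF. Qed.

Lemma mul_fun_mx (F1 F2 : T -> T -> rat) :
  fun_mx F1 *m fun_mx F2 = fun_mx (fun u w => \sum_x F1 u x * F2 x w).
Proof.
apply/matrixP => i j; rewrite !mxE.
have sum_enumT (G : T -> rat) : \sum_(k < #|T|) G (enum_val k) = \sum_x G x.
  by rewrite -(big_enum_val (A := T)).
rewrite -(sum_enumT (fun x => F1 (enum_val i) x * F2 x (enum_val j))).
by apply: eq_bigr => k _; rewrite !mxE.
Qed.

Lemma trmx_fun_mx (F : T -> T -> rat) : (fun_mx F)^T = fun_mx (fun u w => F w u).
Proof. by apply/matrixP => i j; rewrite !mxE. Qed.

Lemma add_fun_mx (F1 F2 : T -> T -> rat) :
  fun_mx F1 + fun_mx F2 = fun_mx (fun u w => F1 u w + F2 u w).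
Proof. by apply/matrixP => i j; rewrite !mxE. Qed.

Lemma opp_fun_mx (F : T -> T -> rat) : - fun_mx F = fun_mx (fun u w => - F u w).
Proof. by apply/matrixP => i j; rewrite !mxE. Qed.

Lemma fun_mx0 : fun_mx (fun _ _ => 0) = 0.
Proof. by apply/matrixP => i j; rewrite !mxE. Qed.

Lemma fun_mx1 : fun_mx (fun u w => (u == w)%:R) = 1%:M.
Proof. by apply/matrixP => i j; rewrite !mxE (inj_eq enum_val_inj). Qed.

Definition set_mx (K : {set T}) : 'M[rat]_#|T| :=
  fun_mx (fun u w => ((u == w) && (u \in K))%:R).

Lemma sum_delta u (b : T -> bool) (F : T -> rat) :
  \sum_x ((u == x) && b x)%:R * F x = (b u)%:R * F u.
Proof.
rewrite (bigD1 u) //= eqxx big1 ?addr0 // => x xu.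
by rewrite eq_sym (negbTE xu) mul0r.
Qed.

Lemma mul_set_mx (K L : {set T}) (F : T -> T -> rat) :
  set_mx K *m fun_mx F *m set_mx L = fun_mx (fun u w => (u \in K)%:R * F u w * (w \in L)%:R).
Proof.
rewrite /set_mx !mul_fun_mx; apply: eq_fun_mx => u w.
rewrite (bigD1 w) //= eqxx [X in _ + X]big1 ?addr0 => [|x xw]; last by rewrite (negbTE xw) mulr0.
by rewrite (sum_delta u (fun _ => u \in K) (F^~ w)); case: (w \in L); case: (u \in K) => /=; ring.
Qed.

Lemma set_mxI (K L : {set T}) : set_mx K *m set_mx L = set_mx (K :&: L).
Proof.
rewrite /set_mx mul_fun_mx; apply: eq_fun_mx => u w.
rewrite (sum_delta u (fun _ => u \in K) (fun x => ((x == w) && (x \in L))%:R)) inE.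
by case: (u \in K); case: eqVneq => [->|] //=; rewrite ?mul0r ?mul1r ?mulr0.
Qed.

Lemma tr_set_mx K : (set_mx K)^T = set_mx K.
Proof. by rewrite /set_mx trmx_fun_mx; apply: eq_fun_mx => u w; case: eqVneq => [->|]. Qed.

Lemma set_mx0 : set_mx set0 = 0.
Proof. by rewrite -fun_mx0; apply: eq_fun_mx => u w; rewrite inE andbF. Qed.

Lemma set_mxC K : set_mx K + set_mx (~: K) = 1%:M.
Proof.
rewrite -fun_mx1 /set_mx add_fun_mx; apply: eq_fun_mx => u w; rewrite inE.
by case: (u == w); case: (u \in K).
Qed.

Variable a : rel T.
Local Notation sk := (Defs.skew a).

(* The skew-adjacency matrix of the induced subgraph on K, padded with zeros
   to all of T; unlike [skew_mx a K], its size does not depend on K. *)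
Definition skew_on (K : {set T}) (u w : T) : rat := (u \in K)%:R * sk u w * (w \in K)%:R.

Lemma sr_fun_mx (S : {set T}) : sr a S = \rank (fun_mx (skew_on S)).
Proof.
set E : 'M[rat]_(#|S|, #|T|) := \matrix_(i, j) (enum_rank (enum_val i) == j)%:R.
have rankE (i : 'I_#|T|) (x : T) : (enum_rank x == i) = (x == enum_val i).
  by rewrite -{1}(enum_valK i) (inj_eq enum_rank_inj).
have deltaE (t : T) (G : T -> rat) : \sum_(x in S) (x == t)%:R * G x = (t \in S)%:R * G t.
  have [tS|tS] := boolP (t \in S).
    rewrite (bigD1 t) //= eqxx big1 ?addr0 // => x /andP[_ xt].
    by rewrite (negbTE xt) mul0r.
  rewrite big1 ?mul0r // => x xS; case: eqP => [e|]; last by rewrite mul0r.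
  by move: tS; rewrite -e xS.
have sum_enumS (G : T -> rat) : \sum_(k < #|S|) G (enum_val k) = \sum_(x in S) G x.
  by rewrite -big_enum_val.
have e1 : fun_mx (skew_on S) = E^T *m skew_mx a S *m E.
  apply/matrixP => i j; rewrite !mxE.
  rewrite (eq_bigr (fun l : 'I_#|S| => (\sum_(k < #|S|) (enum_val k == enum_val i)%:R *
        sk (enum_val k) (enum_val l)) * (enum_val l == enum_val j)%:R)); last first.
    move=> l _; rewrite !mxE rankE; congr (_ * _).
    by apply: eq_bigr => k _; rewrite !mxE rankE.
  rewrite (sum_enumS (fun y => (\sum_k (enum_val k == enum_val i)%:R *
        sk (enum_val k) y) * (y == enum_val j)%:R)) /=.
  under eq_bigr => y _ do rewrite mulrC.
  rewrite deltaE (sum_enumS (fun x => (x == enum_val i)%:R * sk x (enum_val j))) /=.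
  by rewrite deltaE /skew_on; ring.
have e2 : E *m E^T = 1%:M.
  apply/matrixP => i j; rewrite !mxE (bigD1 (enum_rank (enum_val i))) //= !mxE eqxx mul1r.
  rewrite big1 ?addr0 => [|k kn]; last by rewrite !mxE eq_sym (negbTE kn) mul0r.
  by rewrite eq_sym (inj_eq enum_rank_inj) (inj_eq enum_val_inj).
rewrite /sr; apply/eqP; rewrite eqn_leq; apply/andP; split.
  have -> : skew_mx a S = E *m fun_mx (skew_on S) *m E^T.
    by rewrite e1 !mulmxA e2 mul1mx -mulmxA e2 mulmx1.
  by apply: leq_trans (mxrankM_maxl _ _) _; apply: mxrankM_maxr.
by rewrite e1; apply: leq_trans (mxrankM_maxl _ _) _; apply: mxrankM_maxr.
Qed.

End VertexMatrices.

Section SkewRankCut.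
Local Open Scope ring_scope.
Variables (T : finType) (a : rel T).
Hypothesis a_oriented : oriented a.
Local Notation sk := (Defs.skew a).

Lemma sum_indicator (K : {set T}) (F : T -> rat) :
  \sum_x (x \in K)%:R * F x = \sum_(x in K) F x.
Proof.
rewrite [RHS]big_mkcond; apply: eq_bigr => x _.
by case: (x \in K); rewrite ?mul1r ?mul0r.
Qed.

Lemma skew_form0T (f : T -> rat) : \sum_x \sum_y f x * (sk x y * f y) = 0.
Proof. exact: (skew_form0 a_oriented predT). Qed.

Lemma sr_cut (K : {set T}) (Y : T -> T -> rat) :
  (forall u w, (u \in K)%:R * sk u w * (w \in ~: K)%:R = \sum_x skew_on a K u x * Y x w) ->
  (forall u w, \sum_x (\sum_y Y y u * skew_on a K y x) * Y x w = 0) ->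
  sr a setT = (sr a K + sr a (~: K))%N.
Proof.
move=> off_block isotropic.
have -> : sr a setT = \rank (fun_mx sk).
  by rewrite sr_fun_mx; congr (\rank _); apply: eq_fun_mx => u w; rewrite /skew_on !inE mul1r mulr1.
rewrite !sr_fun_mx -!mul_set_mx.
apply: (@rank_skew_block_split _ _ _ _ _ (fun_mx Y)).
- by rewrite set_mxI setIid.
- by rewrite set_mxI setIid.
- by rewrite set_mxI setICr set_mx0.
- by rewrite set_mxI setIC setICr set_mx0.
- exact: set_mxC.
- exact: tr_set_mx.
- exact: tr_set_mx.
- by rewrite trmx_fun_mx opp_fun_mx; apply: eq_fun_mx => u w; rewrite (skewN a_oriented).
- by rewrite !mul_set_mx mul_fun_mx; apply: eq_fun_mx => u w; rewrite off_block.
- rewrite mul_set_mx trmx_fun_mx !mul_fun_mx -fun_mx0.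
  by apply: eq_fun_mx => u w; rewrite isotropic.
Qed.

End SkewRankCut.

Section UnicyclicSkewRank.
Local Open Scope ring_scope.
Variables (T : finType) (a : rel T) (c : seq T).
Hypotheses (a_oriented : oriented a) (a_connected : connected_graph a).
Hypotheses (a_edges : n_edges a = #|T|) (c_cycle : is_graph_cycle a c).

Local Notation G := (und a).
Local Notation H := (del_cycle_edges a c).
Local Notation C := (cycle_verts c).
Local Notation sk := (Defs.skew a).
Local Notation Tv v := (rooted_tree a c v).

Let Tv_und v (vc : v \in c) := rooted_tree_und a_oriented a_connected a_edges c_cycle vc.
Let Tv_forest v (vc : v \in c) :=
  forest_rooted_tree a_oriented a_connected a_edges c_cycle vc.
Let Tv_boundary v x y (vc : v \in c) :=
  @rooted_tree_boundary _ _ _ a_oriented a_connected a_edges c_cycle v x y vc.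
Let Tv_cycle v x (vc : v \in c) :=
  @rooted_tree_cycle _ _ _ a_oriented a_connected a_edges c_cycle v x vc.
Let Tv_disjoint v w u (vc : v \in c) :=
  @rooted_trees_disjoint _ _ _ a_oriented a_connected a_edges c_cycle v w u vc.

Lemma saturated_rooted_tree v : v \in c ->
  saturated H (Tv v) v <-> (matching_number G (Tv v :\ v) < matching_number G (Tv v))%N.
Proof.
move=> vc; rewrite -(saturatedE G) ?rooted_tree_root //.
by apply: saturated_eq_in => x y xT yT; rewrite (Tv_und vc xT yT).
Qed.

(* S_K f = e_v, and only v is joined to the outside of K = T{v}: the arcs
   leaving K factor as S_K (f (x) row v). *)
Lemma sr_saturated_root v : v \in c -> saturated H (Tv v) v ->
  sr a setT = (sr a (Tv v) + sr a (~: Tv v))%N.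
Proof.
move=> vc /(saturated_rooted_tree vc) sat; set K := Tv v.
have vK : v \in K := rooted_tree_root a c v.
have [f hf] := (forest_range a_oriented (Tv_forest vc) vK).1 sat.
apply: (sr_cut a_oriented (Y := fun x w => f x * ((w \in ~: K)%:R * sk v w))).
  move=> u w; rewrite (eq_bigr (fun x => ((u \in K)%:R * ((w \in ~: K)%:R * sk v w)) *
                                         ((x \in K)%:R * (sk u x * f x)))); last first.
    by move=> x _; rewrite /skew_on; ring.
  rewrite -mulr_sumr sum_indicator.
  have [uK|_] := boolP (u \in K); last by rewrite /=; ring.
  rewrite hf //; have [wK|_] := boolP (w \in ~: K); last by rewrite /=; ring.
  have [->|uv] := eqVneq u v; first by rewrite /=; ring.
  rewrite skew_eq0 /=; first by ring.
  apply/negP => /(Tv_boundary vc uK); rewrite inE in wK => /(_ wK)[uv'].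
  by move: uv; rewrite uv' eqxx.
move=> u w; set g := fun z => (z \in K)%:R * f z.
rewrite (eq_bigr (fun x => (((u \in ~: K)%:R * sk v u) * ((w \in ~: K)%:R * sk v w)) *
                           \sum_y g y * (sk y x * g x))); last first.
  move=> x _; rewrite mulr_suml mulr_sumr; apply: eq_bigr => y _.
  by rewrite /skew_on /g; ring.
by rewrite -mulr_sumr exchange_big /= skew_form0T // mulr0.
Qed.

Let off_cycle_indicator u z : u \in c ->
  (z \in ~: C)%:R * (z \in Tv u :\ u)%:R = (z \in Tv u :\ u)%:R :> rat.
Proof.
move=> uc; have [/setD1P[zu zT]|_] := boolP (z \in Tv u :\ u); last by rewrite mulr0.
rewrite mulr1 !inE; have [zc|//] := boolP (z \in c).
by move: zu; rewrite (Tv_cycle uc zc zT) eqxx.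
Qed.

Section CycleCut.
Variable g : T -> T -> rat.
Hypothesis g_column : forall w, w \in c -> forall u, u \in Tv w :\ w ->
  \sum_(x in Tv w :\ w) sk u x * g w x = sk u w.

Local Notation cut_mx x w := ((w \in C)%:R * ((x \in Tv w :\ w)%:R * g w x)).

Lemma cycle_cut_factor u w :
  (u \in ~: C)%:R * sk u w * (w \in C)%:R = \sum_x skew_on a (~: C) u x * cut_mx x w.
Proof.
have [wC|_] := boolP (w \in C); last first.
  by rewrite big1 /= ?mulr0 // => x _; rewrite /= !mul0r mulr0.
have wc : w \in c by rewrite inE in wC.
rewrite (eq_bigr (fun x => (u \in ~: C)%:R * ((x \in Tv w :\ w)%:R * (sk u x * g w x)))).
  rewrite -mulr_sumr sum_indicator; have [uC|_] := boolP (u \in ~: C); last by rewrite /=; ring.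
  have uc : u \notin c by rewrite !inE in uC.
  rewrite /= !mul1r mulr1; have [uT|uT] := boolP (u \in Tv w :\ w).
    by rewrite (g_column wc uT).
  have uT' : u \notin Tv w.
    by apply: contra uT => uTw; apply/setD1P; split=> //; apply: contraNneq uc => ->.
  rewrite big1 => [|x /setD1P[xw xT]].
    apply: skew_eq0; apply/negP; rewrite und_sym.
    by move/(Tv_boundary wc (rooted_tree_root a c w) uT') => [_ uc']; rewrite uc' in uc.
  rewrite skew_eq0 ?mul0r //; apply/negP; rewrite und_sym => /(Tv_boundary wc xT uT')[xw'].
  by rewrite xw' eqxx in xw.
move=> x _; rewrite /skew_on /=.
transitivity ((u \in ~: C)%:R * (((x \in ~: C)%:R * (x \in Tv w :\ w)%:R) * (sk u x * g w x)));
  first by ring.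
by rewrite off_cycle_indicator.
Qed.

(* The vectors g w are supported in the trees T{w} - w, with no edge between
   different trees. *)
Lemma cycle_cut_isotropic u w :
  \sum_x (\sum_y cut_mx y u * skew_on a (~: C) y x) * cut_mx x w = 0.
Proof.
have [uC|_] := boolP (u \in C); last first.
  by rewrite big1 // => x _; rewrite big1 ?mul0r // => y _; rewrite /= !mul0r.
have [wC|_] := boolP (w \in C); last by rewrite big1 // => x _; rewrite /= !mul0r mulr0.
have uc : u \in c by rewrite inE in uC.
have wc : w \in c by rewrite inE in wC.
set gu := fun z => (z \in Tv u :\ u)%:R * g u z.
set gw := fun z => (z \in Tv w :\ w)%:R * g w z.
rewrite (eq_bigr (fun x => \sum_y gu y * (sk y x * gw x))); last first.
  move=> x _; rewrite mulr_suml; apply: eq_bigr => y _; rewrite /skew_on /gu /gw /=.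
  transitivity (((y \in ~: C)%:R * (y \in Tv u :\ u)%:R) * g u y * sk y x *
                ((x \in ~: C)%:R * (x \in Tv w :\ w)%:R) * g w x); first by ring.
  by rewrite !off_cycle_indicator //; ring.
have [uw|uw] := eqVneq u w.
  by rewrite exchange_big /=; have := skew_form0T a_oriented gu; rewrite /gw /gu -uw.
apply: big1 => x _; apply: big1 => y _; rewrite /gu /gw.
have [/setD1P[yu yT]|_] := boolP (y \in Tv u :\ u); last by rewrite /=; ring.
have [/setD1P[xw xT]|_] := boolP (x \in Tv w :\ w); last by rewrite /=; ring.
have xT' : x \notin Tv u by apply: (Tv_disjoint wc uc _ xT); rewrite eq_sym.
rewrite skew_eq0 /=; first by ring.
by apply/negP => /(Tv_boundary uc yT xT')[yu']; rewrite yu' eqxx in yu.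
Qed.

End CycleCut.

Lemma sr_unsaturated_cycle : (forall v, v \in c -> ~ saturated H (Tv v) v) ->
  sr a setT = (sr a C + sr a (~: C))%N.
Proof.
move=> unsat; have column w : exists gw : T -> rat, w \in c -> forall u, u \in Tv w :\ w ->
    \sum_(x in Tv w :\ w) sk u x * gw x = sk u w.
  have [wc|] := boolP (w \in c); last by exists (fun _ => 0).
  have wT : w \in Tv w := rooted_tree_root a c w.
  have nsat : (matching_number G (Tv w) <= matching_number G (Tv w :\ w))%N.
    by rewrite leqNgt; apply/negP => /(saturated_rooted_tree wc); apply: unsat.
  by have [gw hgw] := (forest_range a_oriented (Tv_forest wc) wT).2 nsat; exists gw.
have [g g_column] := fin_all_exists column.
rewrite addnC -{2}(setCK C).
apply: (sr_cut a_oriented (Y := fun x w => (w \in C)%:R * ((x \in Tv w :\ w)%:R * g w x))).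
  by move=> u w; rewrite setCK; apply: cycle_cut_factor.
exact: cycle_cut_isotropic.
Qed.

End UnicyclicSkewRank.

Unset Implicit Arguments.

Theorem theorem4p5 (T : finType) (a : rel T) (c : seq T) :
  oriented a -> connected_graph a -> n_edges a = #|T| ->
  is_graph_cycle a c ->
  (forall v, v \in c ->
     saturated (del_cycle_edges a c) (rooted_tree a c v) v ->
     sr a [set: T] = (sr a (rooted_tree a c v) + sr a (~: rooted_tree a c v))%N) /\
  ((forall v, v \in c -> ~ saturated (del_cycle_edges a c) (rooted_tree a c v) v) ->
     sr a [set: T] = (sr a (cycle_verts c) + sr a (~: cycle_verts c))%N).
Proof.
move=> a_oriented a_connected a_edges c_cycle; split.
- exact: sr_saturated_root.
- exact: sr_unsaturated_cycle.
Qed.
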